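(* Let $G$ and $H$ be connected graphs with $\partial(G)=\sigma(G)$ and $\partial(H)=\sigma(H)$. Then $$dim_s(G\square H)=\min\{|\partial(G)|(|\partial(H)|-1),\ |\partial(H)|(|\partial(G)|-1)\}.$$
   Context: Graphs are finite, simple, undirected; $d_G$ is the shortest-path distance. A vertex is simplicial if its neighbors induce a complete graph; $\sigma(G)$ is the set of simplicial vertices. A vertex $u$ is maximally distant from $v$ if $d_G(v,w)\le d_G(u,v)$ for every neighbor $w$ of $u$; distinct $u,v$ are mutually maximally distant if each is maximally distant from the other; the boundary $\partial(G)$ is the set of vertices mutually maximally distant with some vertex. $I_G[u,v]$ is the set of vertices on some shortest $u$–$v$ path; $w$ strongly resolves $u,v$ if $v\in I_G[u,w]$ or $u\in I_G[v,w]$; $dim_s(G)$ is the minimum size of a set $S\subseteq V(G)$ such that every pair of vertices is strongly resolved by some vertex of $S$. $G\square H$ is the Cartesian product: vertex set $V(G)\times V(H)$, $(a,b)\sim(c,d)$ iff ($a=c$ and $bd\in E(H)$) or ($b=d$ and $ac\in E(G)$). *)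

From mathcomp Require Import all_boot all_order.
Set Implicit Arguments. Unset Strict Implicit. Unset Printing Implicit Defensive.

Section Graphs.
Variable T : finType.
Variable e : rel T.

Definition simple_graph := symmetric e /\ irreflexive e.
Definition connected_graph := forall x y : T, connect e x y.

Fixpoint nreach (n : nat) (x y : T) : bool :=
  if n is n'.+1 then [exists z, e x z && nreach n' z y] else x == y.

(* shortest-path distance: least n with a walk of length n
   (every shortest path has < #|T| edges; returns #|T| if unreachable,
   which never happens for connected graphs) *)
Definition dist (x y : T) : nat := find (fun n => nreach n x y) (iota 0 #|T|).

Definition simplicial (v : T) : bool :=
  [forall w1, forall w2, (e v w1 && e v w2 && (w1 != w2)) ==> e w1 w2].
Definition simplicial_set : {set T} := [set v | simplicial v].

Definition max_distant (u v : T) : bool :=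
  [forall w, e u w ==> (dist v w <= dist u v)].
Definition mmd (u v : T) : bool := (u != v) && max_distant u v && max_distant v u.
Definition boundary : {set T} := [set u | [exists v, mmd u v]].

Definition interval (u v : T) : {set T} :=
  [set w | dist u w + dist w v == dist u v].
Definition strongly_resolves (w u v : T) : bool :=
  (v \in interval u w) || (u \in interval v w).
Definition strong_resolving (S : {set T}) : bool :=
  [forall u, forall v, (u != v) ==> [exists w in S, strongly_resolves w u v]].
(* strong metric dimension: minimum size of a strong resolving set
   (setT is always strong resolving, so the arg min is well defined) *)
Definition sdim : nat :=
  #|[arg min_(S < setT | strong_resolving S) #|S|]|.
End Graphs.

Definition cart_prod (T1 T2 : finType) (e1 : rel T1) (e2 : rel T2) : rel (T1 * T2) :=
  fun x y => ((x.1 == y.1) && e2 x.2 y.2) || ((x.2 == y.2) && e1 x.1 y.1).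

(* A set S is strong resolving iff it contains an end of every mutually
   maximally distant (MMD) pair: an MMD pair is strongly resolved only by its own
   ends, and any pair u, v extends to a longest geodesic x .. u .. v .. y, whose
   ends are MMD and strongly resolve u, v.  Distances add in G □ H, so (g, h) and
   (g', h') are MMD iff g, g' and h, h' are; and when the boundary consists of
   simplicial vertices, any two distinct boundary vertices are MMD.  Thus the
   strong resolving sets of G □ H are the vertex covers of the direct product
   K_a × K_b, a = |∂(G)|, b = |∂(H)|.  An independent set of K_a × K_b lies in one
   row or one column, so a minimum vertex cover has ab - max(a, b) elements. *)

From mathcomp Require Import all_boot all_order.
From mathcomp Require Import zify.
Set Implicit Arguments. Unset Strict Implicit. Unset Printing Implicit Defensive.

Section Walks.
Variables (T : finType) (e : rel T).

Lemma nreachD a b x y z :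
  nreach e a x y -> nreach e b y z -> nreach e (a + b) x z.
Proof.
elim: a x => [|a IHa] x /=; first by move/eqP->.
by case/existsP=> w /andP [exw wy] yz; apply/existsP; exists w; rewrite exw IHa.
Qed.

Lemma nreach1 x y : nreach e 1 x y = e x y.
Proof.
apply/existsP/idP => [[z /andP [xz /eqP <-]] // | xy].
by exists y; rewrite xy /=.
Qed.

Lemma nreachSr n x y : nreach e n.+1 x y = [exists z, nreach e n x z && e z y].
Proof.
apply/idP/existsP => [|[z /andP [xz zy]]]; last first.
  by rewrite -addn1; apply: nreachD xz _; rewrite nreach1.
elim: n x => [|n IHn] x /existsP [z /andP [xz zy]].
  by exists x; rewrite /= eqxx -(eqP zy).
have [w /andP [zw wy]] := IHn _ zy.
by exists w; rewrite wy andbT; apply/existsP; exists z; rewrite xz.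
Qed.

Lemma nreach_connect n x y : nreach e n x y -> connect e x y.
Proof.
elim: n x => [|n IHn] x /=; first by move/eqP->.
by case/existsP=> z /andP [xz zy]; apply: connect_trans (connect1 xz) (IHn _ zy).
Qed.

Lemma path_nreach p x : path e x p -> nreach e (size p) x (last x p).
Proof.
elim: p x => [|z p IHp] x //= /andP [xz zp].
by apply/existsP; exists z; rewrite xz IHp.
Qed.

Lemma connect_nreach x y : connect e x y -> exists2 n, n < #|T| & nreach e n x y.
Proof.
case/connectP=> p xp ->; case: (shortenP xp) => q xq uq _.
exists (size q); last exact: path_nreach.
by have := max_card (mem (x :: q)); rewrite (card_uniqP uq).
Qed.

(* No connectivity is needed: [x : T] forces [0 < #|T|], so the search starts at [0]. *)
Lemma distxx x : dist e x x = 0.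
Proof. by rewrite /dist; case: #|T| (max_card (mem [:: x])) => //= n _; rewrite eqxx. Qed.

Lemma nreach_sym (esym : symmetric e) n x y : nreach e n x y -> nreach e n y x.
Proof.
elim: n x y=> [|n IHn] x y; first by rewrite /= eq_sym.
case/existsP=> z /andP [xz zy]; rewrite nreachSr.
by apply/existsP; exists z; rewrite esym xz IHn.
Qed.

End Walks.

Section Distance.
Variables (T : finType) (e : rel T).
Hypothesis esym : symmetric e.
Hypothesis econ : connected_graph e.

Lemma has_nreach_iota x y : has (fun n => nreach e n x y) (iota 0 #|T|).
Proof.
by have [n ltnT xy] := connect_nreach (econ x y); apply/hasP; exists n; rewrite ?mem_iota.
Qed.

Lemma dist_nreach x y : nreach e (dist e x y) x y.
Proof.
have hasxy := has_nreach_iota x y.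
have := nth_find 0 hasxy; rewrite nth_iota //.
by move: hasxy; rewrite has_find size_iota.
Qed.

Lemma dist_le n x y : nreach e n x y -> dist e x y <= n.
Proof.
move=> xy; rewrite leqNgt; apply/negP => ltn.
have := has_nreach_iota x y; rewrite has_find size_iota => ltT.
by have := before_find 0 ltn; rewrite nth_iota ?xy //; apply: ltn_trans ltT.
Qed.

Lemma distC x y : dist e x y = dist e y x.
Proof. by apply/eqP; rewrite eqn_leq !dist_le // nreach_sym // dist_nreach. Qed.

Lemma dist_triangle x y z : dist e x z <= dist e x y + dist e y z.
Proof. exact/dist_le/nreachD/dist_nreach/dist_nreach. Qed.

Lemma dist_eq0 x y : (dist e x y == 0) = (x == y).
Proof.
apply/idP/eqP => [/eqP dxy | ->]; last by rewrite distxx.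
by have := dist_nreach x y; rewrite dxy => /eqP.
Qed.

Lemma dist_edge x y : e x y -> dist e x y <= 1.
Proof. by move=> xy; apply: dist_le; rewrite nreach1. Qed.

Lemma dist_neighbor x y : x != y -> exists2 z, e x z & dist e z y = (dist e x y).-1.
Proof.
rewrite -dist_eq0; case def_d: (dist e x y) => [|n] // _.
have := dist_nreach x y; rewrite def_d => /existsP [z /andP [xz zy]].
exists z => //; apply/eqP; rewrite eqn_leq dist_le //=.
by have := dist_triangle x z y; have := dist_edge xz; lia.
Qed.

Lemma max_distant_notin_interval u v w :
  max_distant e v u -> w != v -> v \notin interval e u w.
Proof.
move=> vu; rewrite eq_sym inE => wv.
have [z vz zw] := dist_neighbor wv; have := dist_eq0 v w; rewrite (negbTE wv).
have := implyP (forallP vu z) vz; have := dist_triangle u z w.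
by rewrite (distC v u); lia.
Qed.

Definition on_geodesic x u v y :=
  dist e x y == dist e x u + dist e u v + dist e v y.

Lemma on_geodesic_rev x u v y : on_geodesic x u v y = on_geodesic y v u x.
Proof.
rewrite /on_geodesic (distC x y) (distC x u) (distC u v) (distC v y).
by congr (_ == _); lia.
Qed.

Lemma on_geodesic_extend x x' u v y : on_geodesic x u v y -> e x x' ->
  dist e x y < dist e x' y -> on_geodesic x' u v y.
Proof.
move=> /eqP xuvy xx' ltxy; apply/eqP.
have := dist_edge xx'; rewrite distC => x'x.
have := dist_triangle x' x y; have := dist_triangle x' x u.
have := dist_triangle x' u y; have := dist_triangle u v y; lia.
Qed.

Lemma on_geodesic_max_distant x u v y : on_geodesic x u v y ->
  (forall x', on_geodesic x' u v y -> dist e x' y <= dist e x y) ->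
  max_distant e x y.
Proof.
move=> xuvy xmax; apply/forallP => w; apply/implyP => xw.
rewrite distC leqNgt; apply/negP => ltxy.
by have := xmax w (on_geodesic_extend xuvy xw ltxy); rewrite leqNgt ltxy.
Qed.

Lemma exists_mmd_beyond u v : u != v -> exists x y,
  [/\ mmd e x y, u \in interval e v x & v \in interval e u y].
Proof.
move=> uv; pose P p := on_geodesic p.1 u v p.2.
have Puv : P (u, v) by rewrite /P /on_geodesic /= !distxx addn0.
case: (arg_maxnP (fun p : T * T => dist e p.1 p.2) Puv) => -[x y] /= xuvy pmax.
have mdxy : max_distant e x y.
  by apply: on_geodesic_max_distant xuvy _ => x'; apply: (pmax (x', y)).
have mdyx : max_distant e y x.
  apply: (@on_geodesic_max_distant _ v u); first by rewrite -on_geodesic_rev.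
  by move=> y'; rewrite -on_geodesic_rev distC (distC y); apply: (pmax (x, y')).
have /eqP duv : dist e u v != 0 by rewrite dist_eq0.
move/eqP: xuvy => /= xuvy.
have := dist_triangle x u y; have := dist_triangle x v y.
have := dist_triangle x u v; have := dist_triangle u v y.
exists x, y; rewrite /mmd mdxy mdyx !andbT !inE -dist_eq0 (distC v x) (distC v u) (distC u x).
by split; apply/eqP; lia.
Qed.

Lemma strong_resolvingP (S : {set T}) :
  reflect (forall u v, mmd e u v -> (u \in S) || (v \in S)) (strong_resolving e S).
Proof.
apply: (iffP forallP) => [resS u v | coverS u].
  case/andP=> /andP [uv mdu] mdv; apply/negPn/negP; rewrite negb_or => /andP [uS vS].
  have /existsP [w /andP [wS]] := implyP (forallP (resS u) v) uv.
  case/orP; apply/negP.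
    by apply: max_distant_notin_interval mdv _; apply: contraNneq vS => <-.
  by apply: max_distant_notin_interval mdu _; apply: contraNneq uS => <-.
apply/forallP => v; apply/implyP => uv.
have [x [y [mxy uvx vuy]]] := exists_mmd_beyond uv.
apply/existsP; case/orP: (coverS _ _ mxy) => [xS | yS].
  by exists x; rewrite xS /strongly_resolves uvx orbT.
by exists y; rewrite yS /strongly_resolves vuy.
Qed.

Lemma max_distant_neq x y z : irreflexive e -> e x z -> max_distant e x y -> x != y.
Proof.
move=> eirr xz; apply: contraTneq => <-; apply/negP => /forallP /(_ z).
by rewrite xz distxx leqn0 dist_eq0 => /eqP zx; rewrite zx eirr in xz.
Qed.

Lemma simplicial_max_distant u v : simplicial e u -> u != v -> max_distant e u v.
Proof.
move=> su uv; apply/forallP => w; apply/implyP => uw.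
have [z uz zv] := dist_neighbor uv; have [<-|zw] := eqVneq z w.
  by rewrite distC zv leq_pred.
have zw' : e z w by apply: (implyP (forallP (forallP su z) w)); rewrite uz uw zw.
have := dist_eq0 u v; rewrite (negbTE uv) (distC v).
by have := dist_triangle w z v; have := dist_edge zw'; rewrite distC; lia.
Qed.

Section BoundarySimplicial.
Hypothesis bd_simplicial : boundary e = simplicial_set e.

Lemma boundary_simplicial_neighbor g : exists g', e g g'.
Proof.
case: (pickP (e g)) => [g' gg' | isog]; first by exists g'.
have : g \in boundary e.
  by rewrite bd_simplicial inE; apply/forallP => w1; apply/forallP => w2; rewrite isog.
rewrite inE => /existsP [v /andP [/andP [gv _] _]].
by have [z gz _] := dist_neighbor gv; exists z.
Qed.

Lemma mmd_boundary x y : mmd e x y = [&& x != y, x \in boundary e & y \in boundary e].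
Proof.
apply/idP/and3P => [mxy | [xy]].
  have /andP [/andP [xy _] _] := mxy; split; rewrite // inE; apply/existsP.
    by exists y.
  by exists x; move: mxy; rewrite /mmd eq_sym andbAC.
rewrite bd_simplicial !inE => sx sy.
by rewrite /mmd xy !simplicial_max_distant // eq_sym.
Qed.

End BoundarySimplicial.

End Distance.

Section CartesianProduct.
Variables (T1 T2 : finType) (e1 : rel T1) (e2 : rel T2).
Hypotheses (e1sym : symmetric e1) (e2sym : symmetric e2).
Hypotheses (e1con : connected_graph e1) (e2con : connected_graph e2).
Local Notation ep := (cart_prod e1 e2).

Lemma cart_prod_sym : symmetric ep.
Proof. by move=> x y; rewrite /cart_prod e1sym e2sym (eq_sym x.1) (eq_sym x.2). Qed.

Lemma nreach_cart_prodl n g g' h : nreach e1 n g g' -> nreach ep n (g, h) (g', h).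
Proof.
elim: n g => [|n IHn] g /=; first by move/eqP->.
case/existsP=> z /andP [gz zg']; apply/existsP; exists (z, h).
by rewrite /cart_prod /= gz eqxx orbT IHn.
Qed.

Lemma nreach_cart_prodr n g h h' : nreach e2 n h h' -> nreach ep n (g, h) (g, h').
Proof.
elim: n h => [|n IHn] h /=; first by move/eqP->.
case/existsP=> z /andP [hz zh']; apply/existsP; exists (g, z).
by rewrite /cart_prod /= hz eqxx IHn.
Qed.

Lemma nreach_cart_prod n x y : nreach ep n x y ->
  exists a b, [/\ a + b = n, nreach e1 a x.1 y.1 & nreach e2 b x.2 y.2].
Proof.
elim: n x => [|n IHn] x /=.
  by move/eqP->; exists 0, 0; split=> /=.
case/existsP=> z /andP [xz zy]; have [a [b [<- za zb]]] := IHn _ zy.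
case/orP: xz => /andP [/eqP xz1 xz2].
  exists a, b.+1; rewrite addnS xz1; split=> //.
  by apply/existsP; exists z.2; rewrite xz2.
exists a.+1, b; rewrite addSn xz1; split=> //.
by apply/existsP; exists z.1; rewrite xz2.
Qed.

Lemma nreach_cart_prod_dist x y :
  nreach ep (dist e1 x.1 y.1 + dist e2 x.2 y.2) x y.
Proof.
case: x y => [g h] [g' h'] /=.
apply: nreachD (nreach_cart_prodl h (dist_nreach e1con g g')) _.
exact: nreach_cart_prodr (dist_nreach e2con h h').
Qed.

Lemma cart_prod_connected : connected_graph ep.
Proof. by move=> x y; apply: nreach_connect (nreach_cart_prod_dist x y). Qed.

Lemma dist_cart_prod x y : dist ep x y = dist e1 x.1 y.1 + dist e2 x.2 y.2.
Proof.
apply/eqP; rewrite eqn_leq (dist_le cart_prod_connected (nreach_cart_prod_dist x y)).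
have [a [b [<- ha hb]]] := nreach_cart_prod (dist_nreach cart_prod_connected x y).
by rewrite leq_add // dist_le.
Qed.

Lemma max_distant_cart_prod x y :
  max_distant ep x y = max_distant e1 x.1 y.1 && max_distant e2 x.2 y.2.
Proof.
have d1C := distC e1sym e1con; have d2C := distC e2sym e2con.
apply/idP/andP => [mdxy | [md1 md2]].
  split; apply/forallP => w; apply/implyP => xw.
    have := forallP mdxy (w, x.2); rewrite /cart_prod /= eqxx xw orbT /=.
    by rewrite !dist_cart_prod /= (d2C y.2); lia.
  have := forallP mdxy (x.1, w); rewrite /cart_prod /= eqxx xw /=.
  by rewrite !dist_cart_prod /= (d1C y.1); lia.
apply/forallP => w; apply/implyP; rewrite /cart_prod !dist_cart_prod.
case/orP => /andP [/eqP <- xw].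
  by have := implyP (forallP md2 w.2) xw; rewrite (d1C y.1); lia.
by have := implyP (forallP md1 w.1) xw; rewrite (d2C y.2); lia.
Qed.

Hypotheses (e1irr : irreflexive e1) (e2irr : irreflexive e2).
(* An isolated vertex is maximally distant from itself, which would break the
   product formula for [mmd] below. *)
Hypotheses (e1nb : forall g, exists g', e1 g g') (e2nb : forall h, exists h', e2 h h').

Lemma mmd_cart_prod x y : mmd ep x y = mmd e1 x.1 y.1 && mmd e2 x.2 y.2.
Proof.
rewrite /mmd !max_distant_cart_prod.
have neq1 g g' : max_distant e1 g g' -> g != g'.
  by have [z gz] := e1nb g; apply: max_distant_neq gz.
have neq2 h h' : max_distant e2 h h' -> h != h'.
  by have [z hz] := e2nb h; apply: max_distant_neq hz.
case md1: (max_distant e1 x.1 y.1); last by rewrite !andbF.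
case md2: (max_distant e2 x.2 y.2); last by rewrite !andbF.
rewrite (neq1 _ _ md1) (neq2 _ _ md2) /= !andbT.
suff -> : x != y by [].
by apply: contraNneq (neq1 _ _ md1) => ->.
Qed.

End CartesianProduct.

Section DirectProductOfCompleteGraphs.
Variables (T1 T2 : finType) (A : {set T1}) (B : {set T2}).

(* [S] is a vertex cover of the direct product of the complete graphs on [A] and [B]. *)
Definition kprod_cover (S : {set T1 * T2}) := forall x y,
  x \in setX A B -> y \in setX A B -> x.1 != y.1 -> x.2 != y.2 ->
  (x \in S) || (y \in S).

Section Independent.
Variable C : {set T1 * T2}.
Hypothesis indC : {in C &, forall x y, x != y -> (x.1 == y.1) || (x.2 == y.2)}.

Lemma kprod_independent_line c0 : c0 \in C ->
  {in C, forall c, c.1 = c0.1} \/ {in C, forall c, c.2 = c0.2}.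
Proof.
move=> c0C; have share c c' : c \in C -> c' \in C -> c.1 != c'.1 -> c.2 = c'.2.
  move=> cC c'C cc'; have neq_cc' : c != c' by apply: contraNneq cc' => ->.
  by apply/eqP; have := indC cC c'C neq_cc'; rewrite (negbTE cc').
have [/exists_inP [c1 c1C c10] | /exists_inPn same1] := boolP [exists c in C, c.1 != c0.1].
  right=> c cC; apply/eqP; apply: contraT => c20.
  have /eqP c01 : c.1 == c0.1 by apply: contraNT c20 => /(share _ _ cC c0C) ->.
  case/negP: c20; rewrite (share _ _ cC c1C) ?c01 1?eq_sym //.
  by rewrite (share _ _ c1C c0C).
by left=> c /same1 /negPn /eqP.
Qed.

Lemma kprod_independent_card : C \subset setX A B -> #|C| <= maxn #|A| #|B|.
Proof.
move=> CAB; have [->|[c0 c0C]] := set_0Vmem C; first by rewrite cards0.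
have inAB c : c \in C -> (c.1 \in A) && (c.2 \in B) by move/(subsetP CAB); rewrite inE.
case: (kprod_independent_line c0C) => same.
  apply: leq_trans (leq_maxr _ _).
  rewrite -(@card_in_imset _ _ snd C) => [|[a b] [a' b'] /same /= -> /same /= -> /= -> //].
  by apply/subset_leq_card/subsetP => _ /imsetP [c /inAB /andP [_ cB] ->].
apply: leq_trans (leq_maxl _ _).
rewrite -(@card_in_imset _ _ fst C) => [|[a b] [a' b'] /same /= -> /same /= -> /= -> //].
by apply/subset_leq_card/subsetP => _ /imsetP [c /inAB /andP [cA _] ->].
Qed.

End Independent.

Lemma kprod_cover_card S : kprod_cover S ->
  minn (#|A| * (#|B| - 1)) (#|B| * (#|A| - 1)) <= #|S|.
Proof.
move=> coverS; set C := setX A B :\: S.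
have := cardsID S (setX A B); rewrite cardsX -/C.
have : #|setX A B :&: S| <= #|S| by apply/subset_leq_card/subsetIr.
have : #|C| <= maxn #|A| #|B|.
  apply: kprod_independent_card; last exact: subsetDl.
  move=> x y; rewrite !in_setD => /andP [xS xAB] /andP [yS yAB] xy.
  apply/negPn/negP; rewrite negb_or => /andP [xy1 xy2].
  by have := coverS _ _ xAB yAB xy1 xy2; rewrite (negbTE xS) (negbTE yS).
rewrite !mulnBr !muln1 (mulnC #|B|).
set AB := #|A| * #|B|; set kS := #|_ :&: S|; set kC := #|C|; lia.
Qed.

Lemma kprod_cover_setXD1r b : kprod_cover (setX A (B :\ b)).
Proof.
move=> x y; rewrite !inE => /andP [xA xB] /andP [yA yB] _ xy2.
by rewrite xA yA xB yB !andbT -negb_and; apply: contra xy2 => /andP [/eqP -> /eqP ->].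
Qed.

Lemma kprod_cover_setXD1l a : kprod_cover (setX (A :\ a) B).
Proof.
move=> x y; rewrite !inE => /andP [xA xB] /andP [yA yB] xy1 _.
by rewrite xA yA xB yB !andbT -negb_and; apply: contra xy1 => /andP [/eqP -> /eqP ->].
Qed.

Lemma kprod_cover_min : exists2 S, kprod_cover S &
  #|S| = minn (#|A| * (#|B| - 1)) (#|B| * (#|A| - 1)).
Proof.
have [A0 | [a aA]] := set_0Vmem A.
  by exists set0; [move=> x y; rewrite A0 !inE | rewrite A0 !cards0 muln0].
have [B0 | [b bB]] := set_0Vmem B.
  by exists set0; [move=> x y; rewrite B0 !inE andbF | rewrite B0 !cards0 muln0].
case: leqP => _.
  exists (setX A (B :\ b)); first exact: kprod_cover_setXD1r.
  by rewrite cardsX (cardsD1 b B) bB add1n subn1.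
exists (setX (A :\ a) B); first exact: kprod_cover_setXD1l.
by rewrite cardsX (cardsD1 a A) aA add1n subn1 mulnC.
Qed.

End DirectProductOfCompleteGraphs.

Lemma strong_resolving_setT (T : finType) (e : rel T) : strong_resolving e setT.
Proof.
apply/forallP => u; apply/forallP => v; apply/implyP => _; apply/existsP; exists u.
by rewrite inE /strongly_resolves !inE distxx addn0 eqxx orbT.
Qed.

Lemma sdim_eq (T : finType) (e : rel T) n :
  (forall S, strong_resolving e S -> n <= #|S|) ->
  (exists2 S, strong_resolving e S & #|S| = n) -> sdim e = n.
Proof.
move=> lbS [S resS eqSn]; rewrite /sdim.
case: (arg_minnP (fun S : {set T} => #|S|) (strong_resolving_setT e)) => S' resS' minS'.
by apply/eqP; rewrite -eqSn eqn_leq minS' // eqSn lbS.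
Qed.

Section StrongResolvingCartesianProduct.
Variables (T1 T2 : finType) (e1 : rel T1) (e2 : rel T2).
Hypotheses (G1 : simple_graph e1) (G2 : simple_graph e2).
Hypotheses (e1con : connected_graph e1) (e2con : connected_graph e2).
Hypotheses (bd1 : boundary e1 = simplicial_set e1) (bd2 : boundary e2 = simplicial_set e2).

Lemma mmd_cart_prod_boundary x y : mmd (cart_prod e1 e2) x y =
  [&& x \in setX (boundary e1) (boundary e2), y \in setX (boundary e1) (boundary e2),
      x.1 != y.1 & x.2 != y.2].
Proof.
have [[e1sym e1irr] [e2sym e2irr]] := (G1, G2).
have nb1 := boundary_simplicial_neighbor e1con bd1.
have nb2 := boundary_simplicial_neighbor e2con bd2.
rewrite (mmd_cart_prod e1sym e2sym e1con e2con e1irr e2irr nb1 nb2).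
rewrite (mmd_boundary e1sym e1con bd1) (mmd_boundary e2sym e2con bd2).
case: x y => [g h] [g' h'] /=; rewrite !in_setX.
by case: (g \in _); case: (g' \in _); case: (h \in _); case: (h' \in _); rewrite /= ?andbT ?andbF.
Qed.

Lemma strong_resolving_cart_prod S :
  strong_resolving (cart_prod e1 e2) S <-> kprod_cover (boundary e1) (boundary e2) S.
Proof.
have [[e1sym _] [e2sym _]] := (G1, G2).
have resP := strong_resolvingP (cart_prod_sym e1sym e2sym) (cart_prod_connected e1con e2con) S.
split => [/resP coverS x y xAB yAB xy1 xy2 | coverS].
  by apply: coverS; rewrite mmd_cart_prod_boundary xAB yAB xy1 xy2.
by apply/resP => x y; rewrite mmd_cart_prod_boundary => /and4P [xAB yAB]; apply: coverS.
Qed.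

End StrongResolvingCartesianProduct.

Theorem corollary17 (T1 T2 : finType) (e1 : rel T1) (e2 : rel T2) :
  simple_graph e1 -> simple_graph e2 ->
  connected_graph e1 -> connected_graph e2 ->
  boundary e1 = simplicial_set e1 -> boundary e2 = simplicial_set e2 ->
  sdim (cart_prod e1 e2) =
  minn (#|boundary e1| * (#|boundary e2| - 1)) (#|boundary e2| * (#|boundary e1| - 1)).
Proof.
move=> G1 G2 e1con e2con bd1 bd2.
have resP := strong_resolving_cart_prod G1 G2 e1con e2con bd1 bd2.
apply: sdim_eq => [S /resP | ]; first exact: kprod_cover_card.
by have [S /resP resS cardS] := kprod_cover_min (boundary e1) (boundary e2); exists S.
Qed.
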